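(* Let $\Delta$ be a group and let $A, B$ be subgroups of $\Delta$ with $c(A,B) < \infty$. Then $\mathbf{C}_n(A, \Delta) \simeq \mathbf{C}_n(B, \Delta)$.
   Context: For subgroups $\Delta_1,\Delta_2$ of a group, $c(\Delta_1,\Delta_2) = [\Delta_1:\Delta_1\cap\Delta_2][\Delta_2:\Delta_1\cap\Delta_2]$. For $\Gamma \leq H$, $\mathbf{c}_k(\Gamma,H) \in \mathbb{N}\cup\{\infty\}$ is the cardinality of $\{\Delta \leq H : c(\Gamma,\Delta) = k\}$ and $\mathbf{C}_n(\Gamma,H) = \sum_{k=1}^n \mathbf{c}_k(\Gamma,H)$. For $f,g:\mathbb{N}\to\mathbb{N}\cup\{\infty\}$, $f \preceq g$ means there exists $C>0$ with $f(n) \leq C g(Cn)$ for all $n$; $f \simeq g$ means $f \preceq g$ and $g \preceq f$. *)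

From HB Require Import structures.
From mathcomp Require Import all_boot finmap.
From mathcomp Require Import boolp classical_sets cardinality.
Set Implicit Arguments. Unset Strict Implicit. Unset Printing Implicit Defensive.

Local Open Scope classical_set_scope.
Local Open Scope group_scope.

(** Extended naturals N ∪ {∞}: [Some n] is n, [None] is ∞. *)
Definition enat := option nat.

Definition ncard {T : choiceType} (A : set T) : enat :=
  if `[< finite_set A >] then Some (#|` fset_set A|)%fset else None.

Definition eadd (a b : enat) : enat :=
  match a, b with Some x, Some y => Some (x + y)%N | _, _ => None end.
Definition emul (a b : enat) : enat :=
  match a, b with Some x, Some y => Some (x * y)%N | _, _ => None end.
Definition ele (a b : enat) : bool :=
  match a, b with
  | Some x, Some y => (x <= y)%N
  | _, None => true
  | None, Some _ => false
  end.

Section GroupDefs.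
Variable G : groupType.

Definition subgroup (H : set G) : Prop := group_closed (mem H).

Definition lcoset (x : G) (K : set G) : set G := [set x * k | k in K].

Definition gindex (H K : set G) : enat := ncard [set lcoset x K | x in H].

Definition cc (D1 D2 : set G) : enat :=
  emul (gindex D1 (D1 `&` D2)) (gindex D2 (D1 `&` D2)).

Definition ck (k : nat) (Gam H : set G) : enat :=
  ncard [set D : set G | subgroup D /\ D `<=` H /\ cc Gam D = Some k].

Definition CC (n : nat) (Gam H : set G) : enat :=
  \big[eadd/Some 0%N]_(1 <= k < n.+1) ck k Gam H.

End GroupDefs.

Definition gpreceq (f g : nat -> enat) : Prop :=
  exists C : nat, (0 < C)%N /\ forall n, ele (f n) (emul (Some C) (g (C * n)%N)).

Definition gsimeq (f g : nat -> enat) : Prop := gpreceq f g /\ gpreceq g f.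

From HB Require Import structures.
From mathcomp Require Import all_boot finmap.
From mathcomp Require Import boolp classical_sets cardinality.
Set Implicit Arguments. Unset Strict Implicit. Unset Printing Implicit Defensive.

(** For subgroups X, Y, Z the indices satisfy
    [X : X ∩ Z] <= [X : X ∩ Y] [Y : Y ∩ Z]: the coset x(X ∩ Z) is determined
    by x(X ∩ Y) together with r⁻¹x(Y ∩ Z), where r is a fixed representative
    of x(X ∩ Y) (note r⁻¹x ∈ Y).  Applied twice this gives
    c(B, D) <= c(A, B) c(A, D), so with a = c(A, B) every D with
    1 <= c(A, D) <= n satisfies 1 <= c(B, D) <= a n, i.e.
    C_n(A, Δ) <= C_(a n)(B, Δ); the symmetry of c gives the converse. *)

Local Open Scope classical_set_scope.
Local Open Scope card_scope.

Lemma ele_trans a b c : ele a b -> ele b c -> ele a c.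
Proof. by case: a; case: b; case: c => //= x y z; apply: leq_trans. Qed.

Lemma ele_refl : reflexive ele.
Proof. by case=> //= n; apply: leqnn. Qed.

Lemma ele_Some a n : ele a (Some n) -> exists2 m, a = Some m & (m <= n)%N.
Proof. by case: a => //= m mn; exists m. Qed.

Lemma ele_emul2 a b c d : ele a b -> ele c d -> ele (emul a c) (emul b d).
Proof. by case: a; case: b; case: c; case: d => //= *; apply: leq_mul. Qed.

Lemma ele_emul_pos c a b : (0 < c)%N -> ele a b -> ele a (emul (Some c) b).
Proof.
by case: a; case: b => //= y x c_gt0 /leq_trans; apply; rewrite leq_pmull.
Qed.

Lemma emulC : commutative emul.
Proof. by case=> [a|] [b|] //=; rewrite mulnC. Qed.

Lemma emulACA : interchange emul emul.
Proof. by case=> [a|] [b|] [c|] [d|] //=; rewrite mulnACA. Qed.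

Lemma ncardE {T : choiceType} (A : set T) :
  finite_set A -> ncard A = Some #|` fset_set A|%fset.
Proof. by move=> finA; rewrite /ncard asboolT. Qed.

Lemma ncard_infinite {T : choiceType} (A : set T) :
  ~ finite_set A -> ncard A = None.
Proof. by move=> infA; rewrite /ncard asboolF. Qed.

Lemma ncard0 {T : choiceType} : ncard (@set0 T) = Some 0%N.
Proof. by rewrite ncardE ?fset_set0 ?cardfs0. Qed.

Lemma ncard_le {T U : choiceType} (A : set T) (B : set U) :
  A #<= B -> ele (ncard A) (ncard B).
Proof.
move=> AB; have [finB|infB] := pselect (finite_set B); last first.
  by rewrite (ncard_infinite infB); case: (ncard A).
have /finite_setP[n Bn] := finB.
have An : A #<= `I_n.
  by apply: card_le_trans AB _; move: Bn; rewrite card_eq_le => /andP[].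
have finA : finite_set A by apply/finite_set_leP; exists n.
rewrite (ncardE finA) (ncardE finB) /= (card_fset_set Bn).
exact: geq_card_fset_set.
Qed.

Lemma subset_ncard_le {T : choiceType} (A B : set T) :
  A `<=` B -> ele (ncard A) (ncard B).
Proof. by move=> AB; apply/ncard_le/subset_card_le. Qed.

Lemma ncardU {T : choiceType} (A B : set T) :
  A `&` B = set0 -> ncard (A `|` B) = eadd (ncard A) (ncard B).
Proof.
move=> AB0; have [finA|infA] := pselect (finite_set A); last first.
  by rewrite (ncard_infinite infA) ncard_infinite // finite_setU => -[].
have [finB|infB] := pselect (finite_set B); last first.
  rewrite (ncard_infinite infB) ncard_infinite; first by case: (ncard A).
  by rewrite finite_setU => -[].
rewrite (ncardE finA) (ncardE finB) ncardE ?finite_setU //=.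
by rewrite fset_setU // cardfsU -fset_setI // AB0 fset_set0 cardfs0 subn0.
Qed.

Lemma cardfsM_le {K K' : choiceType} (A : {fset K}) (B : {fset K'}) :
  (#|` (A `*` B)%fset| <= #|` A| * #|` B|)%N.
Proof.
have sub : (A `*` B `<=` [fset z in [seq (x, y) | x <- A, y <- B]])%fset.
  apply/fsubsetP => -[x y]; rewrite in_fsetM /= => /andP[xA yB].
  by rewrite !inE /=; apply/allpairsP; exists (x, y).
apply: leq_trans (fsubset_leq_card sub) _.
by rewrite card_fseq (leq_trans (size_undup _)) // size_allpairs.
Qed.

Lemma ncard_setX_le {T U : choiceType} (A : set T) (B : set U) :
  ele (ncard (A `*` B)) (emul (ncard A) (ncard B)).
Proof.
have [finA|infA] := pselect (finite_set A); last first.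
  by rewrite (ncard_infinite infA); case: (ncard (A `*` B)) (ncard B).
have [finB|infB] := pselect (finite_set B); last first.
  rewrite (ncard_infinite infB).
  by case: (ncard (A `*` B)) (ncard A) => [?|] [?|].
rewrite (ncardE finA) (ncardE finB) ncardE /=; last exact: finite_setX.
by rewrite fset_setX //; apply: cardfsM_le.
Qed.

Lemma card_image_factor_le {T U V : Type} (S : set T) (f : T -> U) (g : T -> V) :
  (forall x y, S x -> S y -> g x = g y -> f x = f y) -> f @` S #<= g @` S.
Proof.
move=> fg; have [[x0 Sx0]|S0] := pselect (exists x, S x); last first.
  have -> : S = set0 by apply/seteqP; split=> // x Sx; apply: S0; exists x.
  by rewrite image_set0; apply: card_ge0.
have [s sP] : {s : V -> T & forall v, (g @` S) v -> S (s v) /\ g (s v) = v}.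
  apply: (choice (P := fun v x => (g @` S) v -> S x /\ g x = v)) => v.
  have [[x Sx gx]|Sv] := pselect ((g @` S) v); first by exists x.
  by exists x0.
have -> : f @` S = (f \o s) @` (g @` S).
  apply/seteqP; split=> [_ [x Sx <-]|_ [v gSv <-]].
  - have [Ssx gsx] : S (s (g x)) /\ g (s (g x)) = g x by apply: sP; exists x.
    by exists (g x); [exists x | exact: fg Ssx Sx gsx].
  - by exists (s v); [case: (sP v gSv) |].
exact: card_image_le.
Qed.

Local Open Scope group_scope.

Section Subgroups.
Variable G : groupType.
Implicit Types (H K X Y Z : set G) (x y : G).

Lemma subgroup1 H : subgroup H -> H 1.
Proof. by case; rewrite in_setE. Qed.

Lemma subgroup_neq0 H : subgroup H -> H !=set0.
Proof. by exists 1; apply: subgroup1. Qed.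

Lemma subgroupV H x : subgroup H -> H x -> H x^-1.
Proof. by move=> /group_closedV HV; move: (HV x); rewrite !in_setE. Qed.

Lemma subgroupM H x y : subgroup H -> H x -> H y -> H (x * y).
Proof. by move=> /group_closedM HM; move: (HM x y); rewrite !in_setE. Qed.

Lemma subgroupI H K : subgroup H -> subgroup K -> subgroup (H `&` K).
Proof.
move=> sH sK; split; first by rewrite in_setE; split; apply: subgroup1.
move=> x y; rewrite !in_setE => -[Hx Kx] [Hy Ky].
by split; apply: subgroupM => //; apply: subgroupV.
Qed.

Lemma lcoset_id K x : subgroup K -> lcoset x K x.
Proof. by move=> sK; exists 1; [apply: subgroup1 | rewrite mulg1]. Qed.

Lemma eq_lcoset K x y : subgroup K -> lcoset x K = lcoset y K <-> K (x^-1 * y).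
Proof.
move=> sK; split=> [xKyK|Kxy].
  by move: (lcoset_id y sK); rewrite -xKyK => -[k Kk <-]; rewrite mulKg.
apply/seteqP; split=> _ [k Kk <-].
  exists ((x^-1 * y)^-1 * k); first by apply: subgroupM => //; apply: subgroupV.
  by rewrite mulgA invgM invgK mulgA mulgV mul1g.
by exists (x^-1 * y * k); [apply: subgroupM | rewrite !mulgA mulgV mul1g].
Qed.

Lemma gindex_gt0 X K n : X !=set0 -> gindex X K = Some n -> (0 < n)%N.
Proof.
move=> [x Xx]; rewrite /gindex; set C := [set lcoset _ K | _ in X].
have [finC|] := pselect (finite_set C); last by move/ncard_infinite->.
rewrite ncardE // => -[<-]; rewrite cardfs_gt0.
apply/eqP => /(fset_set_set0 finC).
by move/seteqP => -[/(_ (lcoset x K)) C0 _]; apply: C0; exists x.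
Qed.

Lemma gindex_setI_le X Y Z : subgroup X -> subgroup Y -> subgroup Z ->
  ele (gindex X (X `&` Z)) (emul (gindex X (X `&` Y)) (gindex Y (Y `&` Z))).
Proof.
move=> sX sY sZ; have sXY := subgroupI sX sY; have sYZ := subgroupI sY sZ.
have [rep repP] : {rep : set G -> G & forall C x, C x -> C (rep C)}.
  apply: (choice (P := fun C r => forall x, C x -> C r)) => C.
  have [[x Cx]|C0] := pselect (exists x, C x); first by exists x.
  by exists 1 => x Cx; case: C0; exists x.
pose corr x := (rep (lcoset x (X `&` Y)))^-1 * x.
have corrP x : Y (corr x).
  rewrite /corr; have [k [_ Yk] <-] := repP _ _ (lcoset_id x sXY).
  by rewrite invgM mulgVK; apply: subgroupV.
pose pair x := (lcoset x (X `&` Y), lcoset (corr x) (Y `&` Z)).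
apply: ele_trans (ncard_le (card_image_factor_le (g := pair) _)) _.
  move=> x y Xx Xy [xXY_yXY]; rewrite /corr xXY_yXY => /eq_lcoset-/(_ sYZ).
  rewrite invgM invgK mulgA mulgK => -[_ Zxy].
  apply/eq_lcoset; first exact: subgroupI.
  by split=> //; apply: subgroupM => //; apply: subgroupV.
apply: ele_trans (subset_ncard_le _) (ncard_setX_le _ _).
by move=> _ [x Xx <-]; split; [exists x | exists (corr x)].
Qed.

Lemma ccC X Y : cc X Y = cc Y X.
Proof. by rewrite /cc setIC emulC. Qed.

Lemma cc_gt0 X Y n : subgroup X -> subgroup Y -> cc X Y = Some n -> (0 < n)%N.
Proof.
move=> sX sY; rewrite /cc.
case eX: (gindex X _) => [p|] //; case eY: (gindex Y _) => [q|] //= [<-].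
have p_gt0 := gindex_gt0 (subgroup_neq0 sX) eX.
by rewrite muln_gt0 p_gt0 (gindex_gt0 (subgroup_neq0 sY) eY).
Qed.

Lemma cc_le_mul X Y Z : subgroup X -> subgroup Y -> subgroup Z ->
  ele (cc Y Z) (emul (cc X Y) (cc X Z)).
Proof.
move=> sX sY sZ; have YZ_le := gindex_setI_le sY sX sZ.
have ZY_le := gindex_setI_le sZ sX sY.
rewrite ![Y `&` X]setIC ![Z `&` X]setIC in YZ_le ZY_le.
rewrite [Z `&` Y]setIC in ZY_le.
apply: ele_trans (ele_emul2 YZ_le ZY_le) _.
rewrite /cc [emul (gindex Z _) _]emulC emulACA [emul (gindex Y _) _]emulC.
exact: ele_refl.
Qed.

Lemma big_ck (s : seq nat) Gam H : uniq s ->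
  \big[eadd/Some 0%N]_(k <- s) ck k Gam H =
  ncard [set D | subgroup D /\ D `<=` H /\
                 exists2 k, k \in s & cc Gam D = Some k].
Proof.
elim: s => [_|k s IHs /= /andP[ks us]].
  rewrite big_nil -(ncard0 (T := set G)); congr ncard.
  by apply/seteqP; split=> // D [_ [_ []]].
rewrite big_cons IHs // -ncardU; last first.
  apply/seteqP; split=> // D [[_ [_ cDk]] [_ [_ [j js]]]].
  by rewrite cDk => -[kj]; move: ks; rewrite kj js.
congr ncard; apply/seteqP; split=> D.
  case=> -[sD [DH]] => [cDk|[j js cDj]]; do 2!split=> //.
    by exists k; rewrite ?mem_head.
  by exists j; rewrite // inE js orbT.
move=> [sD [DH [j]]]; rewrite inE => /orP[/eqP-> cDk|js cDj]; first by left.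
by right; do 2!split=> //; exists j.
Qed.

End Subgroups.

Lemma CC_preceq (G : groupType) (A B : set G) a :
  subgroup A -> subgroup B -> cc A B = Some a ->
  gpreceq (fun n => CC n A setT) (fun n => CC n B setT).
Proof.
move=> sA sB cAB; have a_gt0 := cc_gt0 sA sB cAB.
exists a; split=> // n; apply: ele_emul_pos a_gt0 _.
rewrite /CC !big_ck ?iota_uniq //; apply: subset_ncard_le => D [sD [DH [k]]].
rewrite mem_index_iota ltnS => /andP[_ kn] cAD; do 2!split=> //.
have := cc_le_mul sA sB sD; rewrite cAB cAD => /ele_Some[m cBD mak].
exists m; rewrite // mem_index_iota (cc_gt0 sB sD cBD) ltnS.
exact: leq_trans mak (leq_mul (leqnn a) kn).
Qed.

Theorem proposition2 (G : groupType) (A B : set G) :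
  subgroup A -> subgroup B -> cc A B <> None ->
  gsimeq (fun n => CC n A setT) (fun n => CC n B setT).
Proof.
move=> sA sB; case cAB: (cc A B) => [a|] // _.
split; first exact: CC_preceq cAB.
by apply: (CC_preceq (a := a)); rewrite // ccC.
Qed.
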